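(* There exist $(P_3,l)$-jumbles for infinitely many positive integers $l$.
   Context: All graphs are finite and simple; $P_3$ is the path on $3$ vertices, and a graph is $P_3$-free if it has no induced subgraph isomorphic to $P_3$. For a positive integer $l$, a graph $H$ is a $(P_3,l)$-jumble if (S1) for every $0\le s\le l-1$, $V(H)$ can be partitioned into $s$ stable sets, $l-1-s$ cliques, and a set $Z$ such that $H[Z]$ is isomorphic to $P_3$; and (S2) for every partition $X_1,\dots,X_l$ of $V(H)$ there exists $i$ such that $H[X_i]$ is not $P_3$-free. *)

From mathcomp Require Import all_boot.
Set Implicit Arguments. Unset Strict Implicit. Unset Printing Implicit Defensive.

Definition simple_graph (V : finType) (e : rel V) : Prop :=
  symmetric e /\ irreflexive e.

Definition induces_P3 (V : finType) (e : rel V) (Z : {set V}) : Prop :=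
  exists a b c : V, [/\ a != b, b != c, a != c &
    [/\ Z = [set a; b; c], e a b, e b c & ~~ e a c]].

Definition P3_free_on (V : finType) (e : rel V) (X : {set V}) : Prop :=
  ~ exists Z : {set V}, Z \subset X /\ induces_P3 e Z.

Definition stable_set (V : finType) (e : rel V) (X : {set V}) : Prop :=
  forall x y, x \in X -> y \in X -> ~~ e x y.

Definition clique (V : finType) (e : rel V) (X : {set V}) : Prop :=
  forall x y, x \in X -> y \in X -> x != y -> e x y.

(* The partition is
   given by an assignment c : V -> option ('I_s + 'I_(l-1-s)),
   None meaning "in Z". *)
Definition S1_prop (V : finType) (e : rel V) (l : nat) : Prop :=
  forall s : nat, s <= l - 1 ->
    exists c : V -> option ('I_s + 'I_(l - 1 - s)),
      [/\ forall i : 'I_s, stable_set e [set x | c x == Some (inl i)],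
          forall j : 'I_(l - 1 - s), clique e [set x | c x == Some (inr j)]
        & induces_P3 e [set x | c x == None]].

Definition S2_prop (V : finType) (e : rel V) (l : nat) : Prop :=
  forall f : V -> 'I_l, exists i : 'I_l, ~ P3_free_on e [set x | f x == i].

Definition P3_jumble (V : finType) (e : rel V) (l : nat) : Prop :=
  S1_prop e l /\ S2_prop e l.

From mathcomp Require Import all_boot zify.
From Stdlib Require Import Classical.
Set Implicit Arguments. Unset Strict Implicit. Unset Printing Implicit Defensive.

(* The jumble for [l] is the complete multipartite graph with parts of sizes
   1, 2, ..., l + 1.  In it a P3 is two vertices of one part together with a
   vertex of another part, so a P3-free set either lies inside one part or
   meets every part at most once.
   (S1): take the s largest parts as the stable sets and two vertices of part
   l - s plus one of part l - s - 1 as the P3; every remaining part then has at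
   most l - s - 1 vertices, so l - s - 1 transversal cliques cover it.
   (S2): parts 0..n of a P3-free colouring need more than n colours: part n
   has n + 1 vertices, so if at most n colours are available two of them share
   a colour, whose class then lies inside part n and is unavailable below. *)

Definition relabel (V W : finType) (e : rel V) (h : W -> V) : rel W :=
  [rel x y | e (h x) (h y)].

Lemma relabel_simple (V W : finType) (e : rel V) (h : W -> V) :
  simple_graph e -> simple_graph (relabel e h).
Proof. by case=> esym eirr; split=> [x y | x]; [apply: esym | apply: eirr]. Qed.

Section Relabel.
Variables (V W : finType) (e : rel V) (h : W -> V) (g : V -> W).
Hypotheses (hK : cancel h g) (gK : cancel g h).

Lemma induces_P3_relabel Z :
  induces_P3 e Z -> induces_P3 (relabel e h) (h @^-1: Z).
Proof.
case=> a [b [c [ab bc ac [-> eab ebc eac]]]].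
exists (g a), (g b), (g c); rewrite /relabel /= !(can_eq gK) !gK.
split=> //; split=> //.
by apply/setP => x; rewrite !inE !(can2_eq hK gK).
Qed.

Lemma stable_set_relabel (X : {set V}) :
  stable_set e X -> stable_set (relabel e h) (h @^-1: X).
Proof. by move=> stX x y; rewrite !inE; apply: stX. Qed.

Lemma clique_relabel (X : {set V}) : clique e X -> clique (relabel e h) (h @^-1: X).
Proof. by move=> clX x y; rewrite !inE => hx hy xy; apply: clX; rewrite ?(can_eq hK). Qed.

Lemma P3_free_on_relabel (X : {set V}) :
  P3_free_on (relabel e h) (h @^-1: X) -> P3_free_on e X.
Proof.
move=> free [Z [ZX P3Z]]; apply: free.
by exists (h @^-1: Z); split; [apply: preimsetS | apply: induces_P3_relabel].
Qed.

Lemma P3_jumble_relabel l : P3_jumble e l -> P3_jumble (relabel e h) l.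
Proof.
have class_relabel (T : eqType) (c : V -> T) v :
    [set x | c (h x) == v] = h @^-1: [set y | c y == v].
  by apply/setP => x; rewrite !inE.
case=> S1 S2; split.
- move=> s sl; have [c [stable cliq P3]] := S1 s sl.
  exists (c \o h); rewrite /comp; split=> [i | j |]; rewrite class_relabel.
  + exact: stable_set_relabel.
  + exact: clique_relabel.
  + exact: induces_P3_relabel.
- move=> f; have [i nfree] := S2 (f \o g); exists i => free; apply: nfree.
  by apply: P3_free_on_relabel; rewrite -class_relabel; under eq_finset do rewrite /= hK.
Qed.

End Relabel.

Definition multipartite (V : finType) (part : V -> nat) : rel V :=
  [rel x y | part x != part y].

Section Multipartite.
Variables (V : finType) (part : V -> nat).
Local Notation e := (multipartite part).

Lemma multipartite_simple : simple_graph e.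
Proof. by split=> [x y | x]; rewrite /multipartite /= ?eqxx // eq_sym. Qed.

Lemma multipartite_induces_P3 a b c :
  part a = part c -> part b != part a -> a != c -> induces_P3 e [set a; b; c].
Proof.
move=> ac ba anc; exists a, b, c.
rewrite /multipartite /= -ac eqxx (eq_sym (part a)) ba; split=> //.
  by apply: contraNneq ba => <-.
by apply: contraNneq ba => ->; rewrite ac.
Qed.

Lemma P3_free_on_in_part X x y z : P3_free_on e X ->
  x \in X -> y \in X -> z \in X -> x != y -> part x = part y -> part z = part x.
Proof.
move=> free xX yX zX xy pxy; case: (eqVneq (part z) (part x)) => // pz.
exfalso; apply: free.
exists [set x; z; y]; split; last exact: multipartite_induces_P3.
by apply/subsetP => w; rewrite !inE => /orP [/orP [] | ] /eqP ->.
Qed.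

Variables (m : nat) (f : V -> 'I_m).
Hypothesis parts_large : forall K, K <= m -> K < #|[set x | part x == K]|.
Hypothesis classes_free : forall i, P3_free_on e [set x | f x == i].

Lemma colours_needed n (C : {set 'I_m}) :
  n <= m -> (forall x, part x <= n -> f x \in C) -> n < #|C|.
Proof.
elim: n C => [|n IH] C nm fC.
  have /card_gt0P [x] := parts_large (leq0n m); rewrite inE => /eqP px0.
  by apply/card_gt0P; exists (f x); apply: fC; rewrite px0.
set P := [set x | part x == n.+1]; have Pbig := parts_large nm.
have [/dinjectiveP injf | /dinjectivePn [x xP [y]]] := boolP (dinjectiveb f P).
  rewrite -(card_in_imset injf) in Pbig; apply: leq_trans Pbig (subset_leq_card _).
  by apply/subsetP => _ /imsetP [x + ->]; rewrite inE => /eqP px; apply: fC; rewrite px.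
rewrite !inE => /andP [yx py] fxy; move: xP; rewrite inE => /eqP px.
have class_fx_in_part z : f z = f x -> part z = n.+1.
  move=> fz; rewrite -(eqP py).
  apply: (P3_free_on_in_part (@classes_free (f x)) _ _ _ yx);
    by rewrite ?inE ?fz -?fxy ?px ?(eqP py).
rewrite (cardsD1 (f x)) fC ?px //; apply: (IH _ (ltnW nm)) => z zn.
rewrite !inE fC ?andbT; last exact: leqW.
by apply: contraTneq zn => /class_fx_in_part ->; rewrite ltnn.
Qed.

End Multipartite.

Lemma multipartite_S2 (V : finType) (part : V -> nat) l :
  (forall K, K <= l -> K < #|[set x | part x == K]|) -> S2_prop (multipartite part) l.
Proof.
move=> large f; apply: not_all_ex_not => free.
have := colours_needed large free (C := setT) (leqnn l) (fun x _ => in_setT (f x)).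
by rewrite cardsT card_ord ltnn.
Qed.

Definition stair (l : nat) : finType := {p : 'I_l.+1 * 'I_l.+1 | p.2 <= p.1}.

Section Staircase.
Variable l : nat.
Local Notation stair := (stair l).
Definition level (x : stair) : nat := (val x).1.
Definition pos (x : stair) : nat := (val x).2.

Lemma level_le x : level x <= l. Proof. by rewrite /level -ltnS. Qed.
Lemma pos_le x : pos x <= level x. Proof. exact: (valP x). Qed.

Lemma stair_eq x y : level x = level y -> pos x = pos y -> x = y.
Proof.
rewrite /level /pos => lxy pxy; apply: val_inj.
by case: (val x) (val y) lxy pxy => [a b] [c d] /= /val_inj -> /val_inj ->.
Qed.

Definition stair_vertex k j : stair :=
  insubd (exist _ (ord0, ord0) (leqnn 0) : stair) (inord k, inord j).

Section Vertex.
Variables k j : nat.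
Hypotheses (jk : j <= k) (kl : k <= l).

Lemma stair_vertexE : val (stair_vertex k j) = (inord k, inord j).
Proof. by rewrite insubdK // unfold_in /= !inordK //; lia. Qed.

Lemma level_vertex : level (stair_vertex k j) = k.
Proof. by rewrite /level stair_vertexE /= inordK. Qed.

Lemma pos_vertex : pos (stair_vertex k j) = j.
Proof. by rewrite /pos stair_vertexE /= inordK //; apply: leq_trans kl. Qed.

Lemma eq_stair_vertex x : (x == stair_vertex k j) = (level x == k) && (pos x == j).
Proof.
apply/idP/idP => [/eqP -> | /andP [/eqP lx /eqP px]].
  by rewrite level_vertex ?pos_vertex ?eqxx.
by apply/eqP; apply: stair_eq; rewrite ?level_vertex ?pos_vertex.
Qed.

End Vertex.

Lemma stair_levels_large K : K <= l -> K < #|[set x | level x == K]|.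
Proof.
move=> Kl; pose v (j : 'I_K.+1) := stair_vertex K j.
have posv (j : 'I_K.+1) : pos (v j) = j by exact: (@pos_vertex K j (ltn_ord j) Kl).
have vinj : injective v by move=> i j /(congr1 pos); rewrite !posv => /val_inj.
rewrite -[K.+1]card_ord -(card_imset _ vinj); apply: subset_leq_card.
by apply/subsetP => _ /imsetP [j _ ->]; rewrite inE (@level_vertex K j (ltn_ord j) Kl).
Qed.

(* The P3 used for [s] stable sets is {(t,0), (t,1), (t-1,0)} with [t = l - s];
   [reserved t k] is the number of its vertices on level [k]. *)
Definition reserved (t k : nat) : nat :=
  if k == t then 2 else if k == t.-1 then 1 else 0.

Definition stair_colouring s (x : stair) : option ('I_s + 'I_(l - 1 - s)) :=
  let t := l - s in
  if t < level x then omap inl (insub (l - level x))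
  else if pos x < reserved t (level x) then None
  else omap inr (insub (pos x - reserved t (level x))).

Lemma stair_colouring_inl s x i :
  stair_colouring s x = Some (inl i) -> level x = l - i.
Proof.
have := level_le x; rewrite /stair_colouring; case: ltnP => _ xl; last first.
  by case: ifP => _ //; case: insub.
by case: insubP => //= i' _ vi' [<-]; rewrite vi'; lia.
Qed.

Lemma stair_colouring_inr s x j :
  stair_colouring s x = Some (inr j) -> pos x = j + reserved (l - s) (level x).
Proof.
rewrite /stair_colouring; case: ltnP => _; first by case: insub.
case: ltnP => // res; case: insubP => //= j' _ vj' [<-]; rewrite vj'; lia.
Qed.

Lemma stair_colouring_None s x : s <= l - 1 ->
  (stair_colouring s x == None) =
  (level x <= l - s) && (pos x < reserved (l - s) (level x)).
Proof.
move=> sl; have xl := level_le x; have px := pos_le x.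
rewrite /stair_colouring; case: ltnP => [lt | ge] /=.
  by case: insubP => //= /negP []; lia.
case: ltnP => res //=; case: insubP => //= /negP []; move: res.
by rewrite /reserved; case: eqP => [E|NE]; [|case: eqP => [E1|NE1]]; lia.
Qed.

Lemma stair_S1 : 0 < l -> S1_prop (multipartite level) l.
Proof.
move=> l0 s sl; exists (stair_colouring s); split.
- move=> i x y; rewrite !inE => /eqP /stair_colouring_inl lx /eqP /stair_colouring_inl ly.
  by rewrite /multipartite /= lx ly eqxx.
- move=> j x y; rewrite !inE => /eqP /stair_colouring_inr px /eqP /stair_colouring_inr py xy.
  rewrite /multipartite /=; apply: contraNneq xy => lxy.
  by apply/eqP; apply: stair_eq; rewrite // px py lxy.
set t := l - s; have t0 : 0 < t by rewrite /t; lia.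
have tl : t <= l by apply: leq_subr.
have -> : [set x | stair_colouring s x == None] =
          [set stair_vertex t 0; stair_vertex t.-1 0; stair_vertex t 1].
  apply/setP => x; rewrite inE stair_colouring_None // -/t !inE.
  rewrite !eq_stair_vertex //; try lia.
  by rewrite /reserved; case: eqP => [E|NE]; [|case: eqP => [E1|NE1]]; lia.
apply: multipartite_induces_P3; rewrite ?level_vertex //; try lia.
by apply: contraTneq isT => /(congr1 pos); rewrite !pos_vertex.
Qed.

End Staircase.

Theorem theorem3p5 :
  forall N : nat, exists l : nat, N <= l /\ 0 < l /\
    exists (n : nat) (e : rel 'I_n), simple_graph e /\ P3_jumble e l.
Proof.
move=> N; exists N.+1; split=> //; split=> //.
exists #|stair N.+1|, (relabel (multipartite (@level N.+1)) enum_val); split.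
  exact/relabel_simple/multipartite_simple.
apply: (P3_jumble_relabel enum_valK enum_rankK); split.
  exact: stair_S1.
exact/multipartite_S2/stair_levels_large.
Qed.
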